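(* Let $G$ be a graph and let $K$ be a clique of $G$ that is a block of $G$ and contains exactly one cut-vertex $c$ of $G$. Let $G_K$ be the graph obtained from $G$ by deleting all vertices of $K$ other than $c$. Then $p(G)=p(G_K)$.
   Context: All graphs are finite and simple. For an acyclic digraph $D$, the phylogeny graph $P(D)$ is the graph on $V(D)$ in which distinct vertices $u,v$ are adjacent if and only if $(u,v)\in A(D)$, or $(v,u)\in A(D)$, or there is a vertex $w$ with $(u,w),(v,w)\in A(D)$. A phylogeny digraph for a graph $G$ is an acyclic digraph $D$ such that $G$ is an induced subgraph of $P(D)$ and $D$ has no arc from a vertex of $V(D)\setminus V(G)$ to a vertex of $V(G)$. The phylogeny number $p(G)$ is the minimum of $|V(D)\setminus V(G)|$ over all phylogeny digraphs $D$ for $G$. *)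

From mathcomp Require Import all_boot.
Set Implicit Arguments. Unset Strict Implicit. Unset Printing Implicit Defensive.

(* A finite simple graph is a symmetric irreflexive relation e on a finType T. *)

Definition acyclic (V : finType) (a : rel V) : Prop :=
  forall x y, a x y -> ~~ connect a y x.

Definition phylo_adj (V : finType) (a : rel V) (u v : V) : bool :=
  (u != v) && [|| a u v, a v u | [exists w, a u w && a v w]].

(* D is a phylogeny digraph for G=(T,e) with vertex set V(G) + k new vertices. *)
Definition phylogeny_digraph (T : finType) (e : rel T) (k : nat)
    (a : rel (T + 'I_k)%type) : Prop :=
  [/\ acyclic a,
      (forall u v : T, u != v -> e u v = phylo_adj a (inl u) (inl v))
    & (forall (i : 'I_k) (u : T), ~~ a (inr i) (inl u))].

Definition has_phylogeny_digraph (T : finType) (e : rel T) (k : nat) : Prop :=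
  exists a : rel (T + 'I_k)%type, phylogeny_digraph e a.

Definition phylogeny_number (T : finType) (e : rel T) (k : nat) : Prop :=
  has_phylogeny_digraph e k /\ (forall j, has_phylogeny_digraph e j -> k <= j).

Definition restr (T : finType) (e : rel T) (S : {set T}) : rel T :=
  [rel x y | [&& x \in S, y \in S & e x y]].

Definition comp_of (T : finType) (e : rel T) (S : {set T}) (x : T) : {set T} :=
  [set y in S | connect (restr e S) x y].

Definition ncomp (T : finType) (e : rel T) (S : {set T}) : nat :=
  #|[set comp_of e S x | x in S]|.

Definition connected_in (T : finType) (e : rel T) (S : {set T}) : bool :=
  (S != set0) && [forall x in S, forall y in S, connect (restr e S) x y].

Definition cut_vertex_in (T : finType) (e : rel T) (S : {set T}) (c : T) : bool :=
  (c \in S) && (ncomp e S < ncomp e (S :\ c)).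

Definition cut_vertex (T : finType) (e : rel T) (c : T) : bool :=
  cut_vertex_in e setT c.

Definition block_cond (T : finType) (e : rel T) (S : {set T}) : bool :=
  connected_in e S && [forall x, ~~ cut_vertex_in e S x].

Definition is_block (T : finType) (e : rel T) (B : {set T}) : Prop :=
  block_cond e B /\ (forall B' : {set T}, B \subset B' -> block_cond e B' -> B' = B).

Definition clique (T : finType) (e : rel T) (K : {set T}) : Prop :=
  forall x y, x \in K -> y \in K -> x != y -> e x y.

Definition induced (T : finType) (e : rel T) (S : {set T}) : rel {x : T | x \in S} :=
  fun x y => e (val x) (val y).
Arguments induced [T] e S.
Arguments phylogeny_number [T] e k.

From mathcomp Require Import all_boot.
Set Implicit Arguments. Unset Strict Implicit. Unset Printing Implicit Defensive.

(* Graph half: every vertex x of K \ {c} has all its neighbours in K.  If x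
   had a neighbour y outside K, then, x not being a cut-vertex, y and c would
   be joined by a simple path avoiding x; together with the edge xy this is a
   simple path from x to c, i.e. an ear of the clique K, and a clique plus an
   ear has no cut-vertex, contradicting the maximality of the block K.

   Digraph half: once K \ {c} only sees K, phylogeny digraphs transfer both
   ways with the same number of extra vertices.  Restricting a phylogeny
   digraph of G to V(G_K) loses no adjacency, because only c can reach a
   deleted vertex.  Conversely a phylogeny digraph of G_K is extended by
   making c point to every vertex of K \ {c} and ordering K \ {c} as a
   transitive tournament; this stays acyclic and realises exactly the edges
   of G. *)

Section Connectivity.
Variables (T : finType) (e : rel T).
Hypothesis e_sym : symmetric e.

Lemma restr_sym (S : {set T}) : symmetric (restr e S).
Proof. by move=> x y; rewrite /restr /= e_sym andbCA. Qed.

Lemma connect_restr_sym (S : {set T}) x y :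
  connect (restr e S) x y = connect (restr e S) y x.
Proof. exact/sym_connect_sym/restr_sym. Qed.

Lemma connect_restr_sub (A B : {set T}) x y :
  A \subset B -> connect (restr e A) x y -> connect (restr e B) x y.
Proof.
move=> AB; apply: connect_sub => u v /and3P[uA vA euv].
by apply: connect1; rewrite /restr /= (subsetP AB _ uA) (subsetP AB _ vA).
Qed.

Lemma connect_restr_edge (S : {set T}) x y :
  x \in S -> y \in S -> e x y -> connect (restr e S) x y.
Proof. by move=> xS yS exy; apply: connect1; rewrite /restr /= xS yS. Qed.

Lemma restr_path_sub (S : {set T}) x p : path (restr e S) x p -> {subset p <= S}.
Proof.
elim: p x => //= y p IH x /andP[/and3P[_ yS _] /IH pS] z.
by rewrite inE => /predU1P[->|/pS].
Qed.

Lemma path_restr_connect (A : {set T}) h s v :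
  path e h s -> {subset h :: s <= A} -> v \in h :: s -> connect (restr e A) h v.
Proof.
move=> hs sA; apply: path_connect; apply: (sub_in_path (P := mem A)) hs.
  by move=> u w uA wA euw; rewrite /restr /= uA wA.
by apply/allP => w /sA.
Qed.

Lemma comp_of_eq (S : {set T}) x y :
  connect (restr e S) x y -> comp_of e S x = comp_of e S y.
Proof.
move=> cxy; apply/setP => w; rewrite !inE; case: (w \in S) => //=.
apply/idP/idP => [cxw|]; last exact: connect_trans cxy.
by apply: connect_trans cxw; rewrite connect_restr_sym.
Qed.

Lemma ncomp_gt0 (S : {set T}) u : u \in S -> 0 < ncomp e S.
Proof.
by move=> uS; rewrite card_gt0; apply/set0Pn; exists (comp_of e S u); apply: imset_f.
Qed.

Lemma ncomp_le1 (S : {set T}) :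
  {in S &, forall u v, connect (restr e S) u v} -> ncomp e S <= 1.
Proof.
move=> conn; rewrite -(cards1 S); apply: subset_leq_card.
apply/subsetP => _ /imsetP[u uS ->]; rewrite inE; apply/eqP/setP => w.
by rewrite !inE; case wS: (w \in S); rewrite //= conn.
Qed.

Lemma ncomp_lt_sub (S D : {set T}) y z :
  D \subset S -> (forall u, u \in S -> exists2 v, v \in D & connect (restr e S) u v) ->
  y \in D -> z \in D -> connect (restr e S) y z -> ~~ connect (restr e D) y z ->
  ncomp e S < ncomp e D.
Proof.
move=> DS reachD yD zD cSyz ncDyz.
pose F := comp_of e S; pose F' := comp_of e D.
pose lift (C : {set T}) := F (odflt y [pick v in C]).
have liftF : {in D, forall v, lift (F' v) = F v}.
  move=> v vD; rewrite /lift; case: pickP => [w /=|]; last first.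
    by move/(_ v); rewrite inE vD connect0.
  by rewrite inE => /andP[_ /(connect_restr_sub DS) /comp_of_eq].
have compsS : [set F u | u in S] = lift @: [set F' v | v in D].
  rewrite -imset_comp; apply/setP => C; apply/imsetP/imsetP => [[u uS ->]|[v vD ->]].
    have [v vD cuv] := reachD u uS; exists v => //=.
    by rewrite liftF // /F (comp_of_eq cuv).
  by exists v; rewrite /= ?liftF ?(subsetP DS).
rewrite /ncomp compsS ltn_neqAle leq_imset_card andbT; apply/negP => /imset_injP inj.
have /setP/(_ z) : F' y = F' z.
  by apply: inj; rewrite ?imset_f // !liftF //; apply: comp_of_eq.
by rewrite !inE zD (negbTE ncDyz) connect0.
Qed.

Lemma path_avoiding_connect (A : {set T}) z h s v :
  path e h s -> uniq (h :: s) -> {subset h :: s <= z |: A} ->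
  v \in h :: s -> v \in A ->
  (h \in A) && connect (restr e A) v h
  || (last h s \in A) && connect (restr e A) v (last h s).
Proof.
elim: s h => [|h' s IH] h /=.
  by move=> _ _ _; rewrite inE => /eqP -> ->; rewrite connect0.
move=> /andP[ehh' hs] /andP[hNs uq] sub.
rewrite inE => /predU1P[-> hA|vs vA]; first by rewrite hA connect0.
have sub' : {subset h' :: s <= z |: A} by move=> w ws; apply: sub; rewrite inE ws orbT.
case/orP: (IH h' hs uq sub' vs vA) => [/andP[h'A cvh']|->]; last by rewrite orbT.
case hA: (h \in A).
  by rewrite /= (connect_trans cvh') // connect_restr_edge // e_sym.
have hz : h = z by move: (sub h (mem_head _ _)); rewrite in_setU1 hA orbF => /eqP.
have sA : {subset h' :: s <= A}.
  move=> w ws; move: (sub' w ws); rewrite in_setU1 => /predU1P[wz|//].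
  by move: hNs; rewrite hz -wz ws.
by rewrite /= sA ?mem_last // (connect_trans cvh') // (path_restr_connect hs sA) ?mem_last.
Qed.
End Connectivity.

Section CliqueBlocks.
Variables (T : finType) (e : rel T).
Hypothesis e_sym : symmetric e.

(* A clique together with an ear -- a simple path between two of its vertices --
   is connected and has no cut-vertex: after deleting one vertex, every vertex
   still reaches the remaining part of the clique. *)
Lemma clique_path_block (K : {set T}) x s :
  clique e K -> path e x s -> uniq (x :: s) -> x \in K -> last x s \in K ->
  block_cond e (K :|: [set w in x :: s]).
Proof.
move=> cK xs uq xK lK; set S := K :|: _.
have inS w : w \in S = (w \in K) || (w \in x :: s) by rewrite !inE.
(* Any A obtained from S by deleting at most the vertex z induces a connected
   subgraph: each vertex of A reaches a clique vertex of A. *)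
have conn z (A : {set T}) : S :\ z \subset A -> A \subset S ->
    {in A &, forall u v, connect (restr e A) u v}.
  move=> SzA AS.
  have toK v : v \in A -> exists2 w, w \in K & (w \in A) && connect (restr e A) v w.
    move=> vA; case vK: (v \in K); first by exists v; rewrite ?vA ?connect0.
    have vs : v \in x :: s by move: (subsetP AS v vA); rewrite inS vK.
    have sub : {subset x :: s <= z |: A}.
      move=> w ws; rewrite in_setU1; case: eqP => //= /eqP wz.
      by apply: (subsetP SzA); rewrite in_setD1 wz inS ws orbT.
    case/orP: (path_avoiding_connect e_sym xs uq sub vs vA) => /andP[wA cvw].
      by exists x; rewrite ?wA.
    by exists (last x s); rewrite ?wA.
  move=> u v uA vA; have [ku kuK /andP[kuA cu]] := toK u uA.
  have [kv kvK /andP[kvA cv]] := toK v vA.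
  apply: connect_trans cu (connect_trans (y := kv) _ _); last by rewrite connect_restr_sym.
  by have [->|kuv] := eqVneq ku kv; rewrite ?connect0 // connect_restr_edge ?cK.
have xS : x \in S by rewrite inS xK.
apply/andP; split.
  apply/andP; split; first by apply/set0Pn; exists x.
  apply/forall_inP => u uS; apply/forall_inP => v vS.
  exact: (conn x S (subD1set _ _) (subxx _) u v uS vS).
apply/forallP => z; rewrite /cut_vertex_in; case: (z \in S) => //=; rewrite -leqNgt.
apply: (@leq_trans 1); last exact: ncomp_gt0 xS.
by apply: ncomp_le1; apply: (conn z); rewrite ?subD1set.
Qed.

Lemma noncut_nbrs_connected x y z :
  ~~ cut_vertex e x -> e x y -> e x z -> y != x -> z != x ->
  connect (restr e (setT :\ x)) y z.
Proof.
move=> xNcut exy exz yx zx; apply: contraNT xNcut => yNz.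
rewrite /cut_vertex /cut_vertex_in in_setT; apply: (ncomp_lt_sub e_sym) yNz.
- exact: subD1set.
- move=> u _; have [->|ux] := eqVneq u x; last by exists u; rewrite ?connect0 // !inE ux.
  by exists y; rewrite ?connect_restr_edge // !inE yx.
- by rewrite !inE yx.
- by rewrite !inE zx.
apply: (connect_trans (y := x)); apply: connect_restr_edge; rewrite ?in_setT //.
by rewrite e_sym.
Qed.

(* Key graph fact: in a block K which is a clique, every non-cut-vertex x of K
   other than c has all its neighbours in K, since a neighbour y outside K would
   give an ear x, y, ..., c of K, contradicting the maximality of the block. *)
Lemma block_clique_nbr (K : {set T}) c x y :
  clique e K -> is_block e K -> c \in K -> x \in K -> x != c ->
  ~~ cut_vertex e x -> e x y -> y \in K.
Proof.
move=> cK [_ Kmax] cK_in xK xc xNcut exy; apply: contraT => yNK.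
have yx : y != x by apply: contraNneq yNK => ->.
have cx : c != x by rewrite eq_sym.
have /connectP[p0 yp0] := noncut_nbrs_connected xNcut exy (cK _ _ xK cK_in xc) yx cx.
case: (shortenP yp0) => p yp uq _ c_last {p0 yp0}.
have ys : path e y p by apply: sub_path yp => u v /and3P[].
have xNp : x \notin y :: p.
  by rewrite inE negb_or eq_sym yx; apply/negP => /(restr_path_sub yp); rewrite !inE eqxx.
have xyp : path e x (y :: p) by rewrite /= exy.
have xy_uq : uniq (x :: y :: p) by rewrite cons_uniq xNp.
have lastK : last x (y :: p) \in K by rewrite /= -c_last.
have blockB := clique_path_block cK xyp xy_uq xK lastK.
have /setP/(_ y) := Kmax _ (subsetUl _ _) blockB.
by rewrite !inE (negbTE yNK) eqxx orbT.
Qed.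
End CliqueBlocks.

Section Digraphs.
Variables (V : finType) (a : rel V).

Lemma connect_forward (P : V -> Prop) x y :
  (forall u v, P u -> a u v -> P v) -> connect a x y -> P x -> P y.
Proof.
move=> Pa /connectP[p xp ->]; elim: p x xp => [|z p IH] x //= /andP[axz zp] Px.
exact: IH zp (Pa _ _ Px axz).
Qed.

Lemma acyclic_pullback (U : finType) (f : U -> V) :
  acyclic a -> acyclic (fun x y => a (f x) (f y)).
Proof.
move=> acy x y axy; apply: contraL (acy _ _ axy) => /connectP[p yp ->].
have fp : path a (f y) (map f p) by apply: homo_path yp.
by rewrite -(last_map f) negbK (path_connect fp (mem_last _ _)).
Qed.

Lemma phylo_adjC u v : phylo_adj a u v = phylo_adj a v u.
Proof.
rewrite /phylo_adj eq_sym orbCA; congr (_ && (_ || (_ || _))).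
by apply/existsP/existsP => -[w /andP[h1 h2]]; exists w; rewrite h1 h2.
Qed.
End Digraphs.

Lemma phylogeny_arc_edge (T : finType) (e : rel T) k (a : rel (T + 'I_k)%type) u v :
  phylogeny_digraph e a -> a (inl u) (inl v) -> e u v.
Proof.
move=> [acy adj _] auv; have uv : u != v.
  by apply: contraTneq (acy _ _ auv) => ->; rewrite connect0.
by rewrite adj // /phylo_adj auv (inj_eq inl_inj) uv.
Qed.

Lemma phylogeny_number_iff (T T' : finType) (e : rel T) (e' : rel T') p :
  (forall k, has_phylogeny_digraph e k <-> has_phylogeny_digraph e' k) ->
  phylogeny_number e p <-> phylogeny_number e' p.
Proof.
move=> same; split=> -[hp minp]; split=> [|j hj].
- exact/same.
- exact/minp/same.
- exact/same.
- exact/minp/same.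
Qed.

Section PendantClique.
Variables (T : finType) (e : rel T) (K : {set T}) (c : T) (k : nat).
Hypothesis e_sym : symmetric e.
Hypothesis K_closed : forall x y, x \in K :\ c -> e x y -> y \in K.

Local Notation R := (K :\ c).
Local Notation S := (~: (K :\ c)).
Local Notation V := (T + 'I_k)%type.
Local Notation VK := ({x : T | x \in S} + 'I_k)%type.

Lemma kept_nbr_removed u t : u \in S -> t \in R -> e u t -> u = c.
Proof.
move=> uS tR eut; have uK := K_closed tR (etrans (e_sym t u) eut).
by move: uS; rewrite !inE uK andbT negbK => /eqP.
Qed.

Definition emb (X : VK) : V :=
  match X with inl u => inl (val u) | inr i => inr i end.

(* Restriction: a phylogeny digraph for G induces one for G_K, since a common
   out-neighbour in R of two kept vertices would force both to be c. *)
Lemma restrict_phylo : has_phylogeny_digraph e k -> has_phylogeny_digraph (induced e S) k.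
Proof.
move=> [a Da]; have [acy adj noin] := Da.
exists (fun X Y => a (emb X) (emb Y)); split; first exact: acyclic_pullback.
  move=> u v uv; rewrite /induced adj ?(inj_eq val_inj) //.
  rewrite /phylo_adj !(inj_eq inl_inj) (inj_eq val_inj) uv /=; congr [|| _, _ | _].
  apply/existsP/existsP => [[[t|i] /andP[aut avt]]|[w /andP[auw avw]]]; last 2 first.
  - by exists (inr i); rewrite /= aut avt.
  - by exists (emb w); rewrite auw avw.
  case: (boolP (t \in S)) => [tS|]; first by exists (inl (Sub t tS)); rewrite /= aut avt.
  rewrite inE negbK => tR.
  have reach_t (w : {x : T | x \in S}) : a (inl (val w)) (inl t) -> val w = c.
    by move=> awt; apply: kept_nbr_removed (valP w) tR (phylogeny_arc_edge Da awt).
  by move: uv; rewrite -(inj_eq val_inj) (reach_t _ aut) (reach_t _ avt) eqxx.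
by move=> i u; apply: noin.
Qed.

Definition proj (X : V) : option VK :=
  match X with inl s => omap inl (insub s) | inr i => Some (inr i) end.

Lemma proj_emb X : proj (emb X) = Some X.
Proof. by case: X => [u|i] //=; rewrite valK. Qed.

Variant proj_spec (s : T) : option VK -> Type :=
  | ProjRemoved of s \in R : proj_spec s None
  | ProjKept (u : {x : T | x \in S}) of val u = s : proj_spec s (Some (inl u)).

Lemma projP s : proj_spec s (proj (inl s)).
Proof.
rewrite /proj; case: insubP => [u _ <-|] /=; first exact: ProjKept.
by rewrite inE negbK; apply: ProjRemoved.
Qed.

Definition rank_of (X : V) : nat := if X is inl s then enum_rank s else 0.

(* Extension of a phylogeny digraph a' for G_K to G: keep a' on kept and
   extra vertices, add the arcs c -> r for r in R, and orient R as the
   transitive tournament given by rank_of. *)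
Definition ext_rel (a' : rel VK) : rel V := fun X Y =>
  match proj X, proj Y with
  | Some X', Some Y' => a' X' Y'
  | Some X', None => if X' is inl u then val u == c else false
  | None, None => rank_of X < rank_of Y
  | None, Some _ => false
  end.

Lemma ext_removed_forward a' X Y :
  proj X = None -> ext_rel a' X Y -> proj Y = None /\ rank_of X < rank_of Y.
Proof. by rewrite /ext_rel => ->; case: (proj Y). Qed.

(* A closed walk would have to stay among kept vertices, where it is a closed
   walk of a', or among deleted ones, where ranks increase strictly. *)
Lemma ext_acyclic a' : acyclic a' -> acyclic (ext_rel a').
Proof.
move=> acy X Y aXY; apply/negP => cYX.
case pX: (proj X) => [X'|]; last first.
  have [pY ltXY] := ext_removed_forward pX aXY.
  pose P Z := proj Z = None /\ rank_of Y <= rank_of Z.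
  have P_fwd U W : P U -> ext_rel a' U W -> P W.
    move=> [pU leYU] /(ext_removed_forward pU)[pW ltUW].
    by split=> //; apply: leq_trans leYU (ltnW ltUW).
  have [_] := connect_forward P_fwd cYX (conj pY (leqnn _)).
  by rewrite leqNgt ltXY.
case pY: (proj Y) => [Y'|]; last first.
  have removed_fwd U W : proj U = None -> ext_rel a' U W -> proj W = None.
    by move=> pU /(ext_removed_forward pU)[].
  by have := connect_forward removed_fwd cYX pY; rewrite pX.
have aXY' : a' X' Y' by move: aXY; rewrite /ext_rel pX pY.
pose P Z := if proj Z is Some Z' then connect a' Y' Z' else true.
have P_fwd U W : P U -> ext_rel a' U W -> P W.
  rewrite /P /ext_rel; case: (proj U) => [U'|]; case: (proj W) => [W'|] //.
  by move=> cYU aUW; apply: connect_trans cYU (connect1 aUW).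
have := connect_forward P_fwd cYX; rewrite /P pX pY => /(_ (connect0 _ _)) cYX'.
by move: (acy _ _ aXY'); rewrite cYX'.
Qed.

(* Adjacency between kept vertices is that of a': a new common out-neighbour
   in R would require both vertices to be c. *)
Lemma ext_adj_kept a' (u v : {x : T | x \in S}) :
  phylo_adj (ext_rel a') (inl (val u)) (inl (val v)) = phylo_adj a' (inl u) (inl v).
Proof.
have proj_kept w : proj (inl (val w)) = Some (inl w) by rewrite /proj valK.
rewrite /phylo_adj !(inj_eq inl_inj) (inj_eq val_inj).
have [// | uv /=] := eqVneq u v.
rewrite /ext_rel !proj_kept; congr [|| _, _ | _].
apply/existsP/existsP => [[W]|[W /andP[auW avW]]]; last first.
  by exists (emb W); rewrite proj_emb auW avW.
case: (proj W) => [W'|/andP[/eqP uc /eqP vc]]; first by exists W'.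
by move: uv; rewrite -(inj_eq val_inj) uc vc eqxx.
Qed.

Lemma ext_adj_removed_kept a' s t :
  s \in R -> t \in S -> phylo_adj (ext_rel a') (inl s) (inl t) = (t == c).
Proof.
move=> sR tS; have st : s != t by apply: contraTneq tS => <-; rewrite inE negbK.
rewrite /phylo_adj (inj_eq inl_inj) st /ext_rel.
case: (projP s) => [_|u us]; last by move: (valP u); rewrite us inE sR.
case: (projP t) => [tR|v <-]; first by rewrite inE tR in tS.
rewrite /=; case: existsP => [[W]|_]; last by rewrite orbF.
by case: (proj W) => [W'|] /andP[// _ ->].
Qed.

Lemma ext_adj_removed a' s t :
  s \in R -> t \in R -> s != t -> phylo_adj (ext_rel a') (inl s) (inl t).
Proof.
move=> sR tR st; rewrite /phylo_adj (inj_eq inl_inj) st /ext_rel.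
case: (projP s) => [_|u us]; last by move: (valP u); rewrite us inE sR.
case: (projP t) => [_|v vt]; last by move: (valP v); rewrite vt inE tR.
have : enum_rank s != enum_rank t by rewrite (inj_eq enum_rank_inj).
by rewrite neq_ltn => /orP[->|->]; rewrite ?orbT.
Qed.

Hypothesis K_clique : clique e K.
Hypothesis c_in_K : c \in K.

Lemma removed_edge s t : s \in R -> t \in S -> e s t = (t == c).
Proof.
move=> sR tS; apply/idP/eqP => [est|->].
  exact: kept_nbr_removed tS sR (etrans (e_sym t s) est).
by case/setD1P: sR => sc sK; apply: K_clique.
Qed.

Lemma extend_phylo : has_phylogeny_digraph (induced e S) k -> has_phylogeny_digraph e k.
Proof.
move=> [a' [acy adj noin]]; exists (ext_rel a'); split; first exact: ext_acyclic.
  move=> s t st; case: (boolP (s \in R)) => sR; case: (boolP (t \in R)) => tR.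
  - rewrite ext_adj_removed //.
    by apply: K_clique => //; [case/setD1P: sR | case/setD1P: tR].
  - have tS : t \in S by rewrite in_setC.
    by rewrite removed_edge // ext_adj_removed_kept.
  - have sS : s \in S by rewrite in_setC.
    by rewrite e_sym phylo_adjC removed_edge // ext_adj_removed_kept.
  - have sS : s \in S by rewrite in_setC.
    have tS : t \in S by rewrite in_setC.
    have uv : Sub s sS != Sub t tS :> {x : T | x \in S} by rewrite -(inj_eq val_inj).
    by have := ext_adj_kept a' (Sub s sS) (Sub t tS); rewrite /= -adj.
move=> i u; rewrite /ext_rel; case: (projP u) => // v _.
exact: noin.
Qed.
End PendantClique.

Theorem mainTheorem5 (T : finType) (e : rel T)
    (e_sym : symmetric e) (e_irr : irreflexive e)
    (K : {set T}) (c : T) :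
  clique e K -> is_block e K ->
  c \in K -> cut_vertex e c ->
  (forall x, x \in K -> cut_vertex e x -> x = c) ->
  forall p : nat,
    phylogeny_number e p <-> phylogeny_number (induced e (~: (K :\ c))) p.
Proof.
move=> K_clique K_block c_in_K _ only_c p.
have K_closed x y : x \in K :\ c -> e x y -> y \in K.
  case/setD1P=> xc xK; apply: (block_clique_nbr e_sym K_clique K_block c_in_K xK xc).
  by apply: contra xc => /(only_c x xK) ->.
apply: phylogeny_number_iff => k; split.
- exact: restrict_phylo e_sym K_closed.
- exact: extend_phylo e_sym K_closed K_clique c_in_K.
Qed.
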